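(* Let $\Sigma$ be a finite alphabet and let $X,Y\subseteq\Sigma^{\mathbb{Z}}$ be constrained systems. Suppose that $X$ is primitive or $Y$ is primitive. Then the sequence $\left(\frac{1}{n}R(\mathscr{B}_n(X),\mathscr{B}_n(Y))\right)_{n\in\mathbb{N}}$ converges; that is, \[R(X,Y)=\lim_{n\to\infty}\frac{R(\mathscr{B}_n(X),\mathscr{B}_n(Y))}{n}.\]
   Context: $\Sigma^{\mathbb{Z}}$ carries the product topology (discrete on $\Sigma$) and the shift $T$, $(T\mathbf{x})_n=\mathbf{x}_{n+1}$. A constrained system is a set $X\subseteq\Sigma^{\mathbb{Z}}$ for which there is a finite directed graph $G=(V,E)$ with a labeling $L:E\to\Sigma$ such that $X$ is the set of label sequences $(L(e_i))_{i\in\mathbb{Z}}$ of bi-infinite directed paths $(e_i)_{i\in\mathbb{Z}}$ in $G$. A labeled graph is irreducible if any two vertices are joined by a directed path, and primitive if it is irreducible and the gcd of its cycle lengths is $1$ (equivalently, there is $n$ such that any two vertices are joined by a directed path of length exactly $n$). $X$ is primitive if it is presented by some primitive labeled graph. The language $\mathscr{B}_n(X)\subseteq\Sigma^n$ is the set of length-$n$ words appearing as consecutive subwords of some element of $X$. For $\overline{u},\overline{v}\in\Sigma^n$, $d(\overline{u},\overline{v})$ is the Hamming distance. For $A,C\subseteq\Sigma^n$, $R(C,A)=\max_{\overline{y}\in A}\min_{\overline{x}\in C}d(\overline{x},\overline{y})$. For shift spaces $X,Y$, $R(X,Y)=\liminf_{n\to\infty}\frac{1}{n}R(\mathscr{B}_n(X),\mathscr{B}_n(Y))$.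 *)

From Stdlib Require Import Reals.
From Coquelicot Require Import Coquelicot.
From mathcomp Require Import all_boot all_order all_algebra.
From mathcomp Require Import boolp.

Set Implicit Arguments.
Unset Strict Implicit.
Unset Printing Implicit Defensive.

Definition zseq (S : finType) := int -> S.

Record lgraph (S : finType) := LGraph {
  gV : finType;
  gE : finType;
  gsrc : gE -> gV;
  gtgt : gE -> gV;
  glab : gE -> S }.

Fixpoint walk (S : finType) (G : lgraph S) (u v : gV G) (s : seq (gE G)) : Prop :=
  match s with
  | [::] => u = v
  | e :: s' => gsrc e = u /\ walk (gtgt e) v s'
  end.

Definition irreducible_graph (S : finType) (G : lgraph S) : Prop :=
  forall u v : gV G, exists s, walk u v s.

(* primitive: irreducible and the gcd of the cycle lengths is 1, i.e. the only
   natural number dividing all cycle lengths is 1. *)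
Definition primitive_graph (S : finType) (G : lgraph S) : Prop :=
  irreducible_graph G /\
  forall d : nat,
    (forall (u : gV G) (s : seq (gE G)), walk u u s -> (0 < size s)%N ->
        (d %| size s)%N) ->
    d = 1%N.

Definition presents (S : finType) (G : lgraph S) (X : zseq S -> Prop) : Prop :=
  forall x : zseq S,
    X x <-> exists e : int -> gE G,
      (forall i : int, gtgt (e i) = gsrc (e (i + 1)%R)) /\
      (forall i : int, x i = glab (e i)).

Definition constrained_system (S : finType) (X : zseq S -> Prop) : Prop :=
  exists G : lgraph S, presents G X.

Definition primitive_system (S : finType) (X : zseq S -> Prop) : Prop :=
  exists G : lgraph S, primitive_graph G /\ presents G X.

Definition lang (S : finType) (X : zseq S -> Prop) (n : nat) : {set n.-tuple S} :=
  [set w : n.-tuple S | `[< exists x : zseq S, X x /\ exists i : int,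
        forall k : 'I_n, tnth w k = x (i + (nat_of_ord k)%:Z)%R >] ].

Definition hamming (S : finType) (n : nat) (u v : n.-tuple S) : nat :=
  \sum_(k < n) (tnth u k != tnth v k).

(* R(C,A) = max_{y in A} min_{x in C} d(x,y); empty max is 0, empty min is n. *)
Definition covR (S : finType) (n : nat) (C A : {set n.-tuple S}) : nat :=
  \max_(y in A) \big[minn/n]_(x in C) hamming x y.

Definition covR_seq (S : finType) (X Y : zseq S -> Prop) (n : nat) : R :=
  Rdiv (INR (covR (lang X n) (lang Y n))) (INR n).

Definition covR_sys (S : finType) (X Y : zseq S -> Prop) : Rbar :=
  LimInf_seq (covR_seq X Y).

From Stdlib Require Import Reals Lra.
From Coquelicot Require Import Coquelicot.
From mathcomp Require Import all_boot all_order all_algebra.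
From mathcomp Require Import boolp zify.

Set Implicit Arguments.
Unset Strict Implicit.
Unset Printing Implicit Defensive.

(* Write R(n) for R(B_n(X), B_n(Y)).  If X is primitive, any two words of X
   can be joined by a bridge word of one fixed length N; covering the two ends
   of a word of Y separately and bridging the two covering words gives
   R(m+N+n) <= R(m) + R(n) + N.  If Y is primitive, bridging two worst-covered
   words of Y gives R(m+N+n) >= R(m) + R(n).  As R(n) <= R(n+1) <= R(n) + 1,
   this makes R(n), resp. n - R(n), subadditive up to a constant, and Fekete's
   lemma yields the convergence of R(n)/n.  The bridge length can be fixed
   because the lengths of closed walks at a vertex of a primitive graph form an
   additive monoid with gcd 1, which contains all large integers. *)

Section Walks.
Variables (S : finType) (G : lgraph S).
Implicit Types (u v w : gV G) (s t : seq (gE G)).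

Lemma walk_cat u v w s t : walk u v s -> walk v w t -> walk u w (s ++ t).
Proof.
elim: s u => [|e s IH] u /=; first by move=> ->.
by move=> [he hs] ht; split=> //; apply: IH.
Qed.

Lemma walk_rcons u v s e : walk u v s -> gsrc e = v -> walk u (gtgt e) (rcons s e).
Proof.
elim: s u => [|e' s IH] u /=; first by move=> ->.
by move=> [he hs] hv; split=> //; apply: IH.
Qed.

Lemma walk_rcons_tgt u v s e : walk u v (rcons s e) -> gtgt e = v.
Proof.
elim: s u => [|e' s IH] u /=; first by move=> [_ ->].
by move=> [_ hs]; apply: IH hs.
Qed.

Definition has_future v := exists r : nat -> gE G,
  gsrc (r 0%N) = v /\ forall n, gtgt (r n) = gsrc (r n.+1).

Definition has_past v := exists l : nat -> gE G,
  gtgt (l 0%N) = v /\ forall n, gtgt (l n.+1) = gsrc (l n).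

Fixpoint prepend s (r : nat -> gE G) (k : nat) : gE G :=
  match s, k with
  | [::], _ => r k
  | e :: _, 0 => e
  | _ :: s', k'.+1 => prepend s' r k'
  end.

Lemma nth_prepend s r k e0 : (k < size s)%N -> prepend s r k = nth e0 s k.
Proof. by elim: s k => [|e s IH] [|k] //= /IH. Qed.

Lemma prepend_walk u v s r : walk u v s ->
  gsrc (r 0%N) = v -> (forall n, gtgt (r n) = gsrc (r n.+1)) ->
  gsrc (prepend s r 0) = u /\ forall n, gtgt (prepend s r n) = gsrc (prepend s r n.+1).
Proof.
elim: s u => [|e s IH] u /=; first by move=> -> hr0 hr; split.
move=> [he hs] hr0 hr; have [IH0 IH1] := IH _ hs hr0 hr.
by split=> // -[|k] /=; rewrite ?IH0.
Qed.

End Walks.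

Lemma mkseqD (T : Type) (f : nat -> T) m n :
  mkseq f (m + n) = mkseq f m ++ mkseq (fun k => f (m + k)%N) n.
Proof.
rewrite /mkseq iotaD map_cat; congr (_ ++ _).
by rewrite add0n -{1}(addn0 m) iotaDl -map_comp.
Qed.

Definition factor (S : finType) (X : zseq S -> Prop) (s : seq S) :=
  exists x, X x /\ exists i : int, s = mkseq (fun k => x (i + k%:Z)%R) (size s).

Section Factors.
Variables (S : finType) (X : zseq S -> Prop).

Lemma factor_cat s1 s2 : factor X (s1 ++ s2) -> factor X s1 /\ factor X s2.
Proof.
move=> [x [Xx [i hs]]]; rewrite size_cat mkseqD in hs.
move/eqP: hs; rewrite eqseq_cat ?size_mkseq // => /andP [/eqP h1 /eqP h2].
split; exists x; split=> //; first by exists i.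
exists (i + (size s1)%:Z)%R; rewrite {1}h2; congr mkseq; apply: funext => k.
by rewrite PoszD GRing.addrA.
Qed.

Lemma factor_rcons s : factor X s -> exists a, factor X (rcons s a).
Proof.
move=> [x [Xx [i hs]]]; exists (x (i + (size s)%:Z)%R), x; split=> //.
by exists i; rewrite size_rcons mkseqS -hs.
Qed.

Lemma factor_of_size x n : X x -> exists s, size s = n /\ factor X s.
Proof.
move=> Xx; exists (mkseq (fun k => x (0 + k%:Z)%R) n); rewrite size_mkseq.
by split=> //; exists x; split=> //; exists 0%R; rewrite size_mkseq.
Qed.

Lemma mem_lang n (t : n.-tuple S) : (t \in lang X n) <-> factor X t.
Proof.
rewrite inE; split.
  move/asboolP=> [x [Xx [i hi]]]; exists x; split=> //; exists i.
  rewrite size_tuple -(map_tnth_enum t) /mkseq -val_enum_ord -map_comp.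
  by apply: eq_map => k /=; rewrite hi.
move=> [x [Xx [i hi]]]; apply/asboolP; exists x; split=> //; exists i => k.
by rewrite (tnth_nth (tnth t k)) hi nth_mkseq // size_tuple.
Qed.

End Factors.

Section Presentation.
Variables (S : finType) (G : lgraph S) (X : zseq S -> Prop).
Hypothesis presG : presents G X.

Lemma factor_of_walk p q w : walk p q w -> has_past p -> has_future q ->
  factor X (map (@glab S G) w).
Proof.
move=> hw [l [hl0 hl]] [r [hr0 hr]].
have [ha0 ha] := prepend_walk hw hr0 hr.
pose e z := match z with Posz n => prepend w r n | Negz n => l n end.
have he : forall i : int, gtgt (e i) = gsrc (e (i + 1)%R).
  case=> [n|[|n]].
  - have -> : (Posz n + 1 = Posz n.+1)%R by lia.
    exact: ha.
  - have -> : (Negz 0 + 1 = Posz 0)%R by lia.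
    by rewrite /= ha0.
  - have -> : (Negz n.+1 + 1 = Negz n)%R by lia.
    exact: hl.
exists (fun z => glab (e z)); split; first by apply/presG; exists e.
exists 0%R; apply: (@eq_from_nth _ (glab (r 0%N))).
  by rewrite size_map size_mkseq.
move=> k; rewrite size_map => hk.
by rewrite (nth_map (r 0%N)) // nth_mkseq // GRing.add0r /= (nth_prepend r (r 0%N) hk).
Qed.

Lemma walk_of_factor s : factor X s -> exists p q w,
  [/\ walk p q w, has_past p, has_future q & map (@glab S G) w = s].
Proof.
move=> [x [/presG [e [he hx]] [i hs]]].
exists (gsrc (e i)), (gsrc (e (i + (size s)%:Z)%R)).
exists (mkseq (fun k => e (i + k%:Z)%R) (size s)); split.
- elim: (size s) => [|m IH]; first by rewrite /= GRing.addr0.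
  rewrite mkseqS; have -> : (i + m.+1%:Z = i + m%:Z + 1)%R by lia.
  by rewrite -he; apply: walk_rcons IH _.
- exists (fun n => e (i - n.+1%:Z)%R); split=> [|n]; rewrite he;
    congr (gsrc (e _)); lia.
- exists (fun n => e (i + (size s + n)%:Z)%R); split=> [|n]; rewrite ?he;
    congr (gsrc (e _)); lia.
- rewrite hs size_mkseq /mkseq -map_comp; apply: eq_map => k /=.
  by rewrite hx.
Qed.

End Presentation.

Section AddMonoid.
Variable A : nat -> Prop.
Hypotheses (A0 : A 0%N) (AD : forall a b, A a -> A b -> A (a + b)%N).

Lemma addmonoid_mul q a : A a -> A (q * a)%N.
Proof. by move=> Aa; elim: q => [|q IH]; rewrite ?mul0n // mulSn; apply: AD. Qed.

(* The least positive difference of two elements of A divides every element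
   of A (the remainder of a division would be a smaller difference). *)
Lemma addmonoid_consecutive : (exists a, A a /\ (0 < a)%N) ->
  (forall d, (forall a, A a -> (d %| a)%N) -> d = 1%N) ->
  exists a, A a /\ A a.+1.
Proof.
move=> [a [Aa a_gt0]] gcdA.
pose P d := `[< (0 < d)%N /\ exists b, A b /\ A (b + d)%N >].
have exP : exists d, P d by exists a; apply/asboolP; split=> //; exists 0%N.
case: (ex_minnP exP) => d /asboolP [d_gt0 [b [Ab Abd]]] d_min.
suff d1 : d = 1%N by exists b; rewrite -addn1 -d1.
apply: gcdA => c Ac; rewrite /dvdn; apply/eqP.
have c_eq := divn_eq c d; set q := (c %/ d)%N in c_eq; set r := (c %% d)%N in c_eq *.
have r_lt : (r < d)%N by rewrite ltn_pmod.
case: (posnP r) => // r_gt0.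
suff /d_min : P r by rewrite leqNgt r_lt.
apply/asboolP; split=> //; exists (q * (b + d))%N; split; first exact: addmonoid_mul.
have -> : (q * (b + d) + r = c + q * b)%N by rewrite c_eq mulnDr; lia.
by apply: AD => //; apply: addmonoid_mul.
Qed.

(* For a <= q and r < a, q * a + r = (q - r) * a + r * (a + 1). *)
Lemma addmonoid_eventually a : A a -> A a.+1 -> forall t, (a * a <= t)%N -> A t.
Proof.
move=> Aa Aa1 t ht; case: (posnP a) => [a0|a_gt0].
  by rewrite -(muln1 t); apply: addmonoid_mul; rewrite -a0.
have t_eq := divn_eq t a; set q := (t %/ a)%N in t_eq; set r := (t %% a)%N in t_eq.
have r_lt : (r < a)%N by rewrite ltn_pmod.
have q_ge : (a <= q)%N by rewrite leq_divRL.
have -> : t = ((q - r) * a + r * a.+1)%N.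
  rewrite t_eq mulnBl mulnS.
  have : (r * a <= q * a)%N by rewrite leq_mul2r; lia.
  lia.
by apply: AD; apply: addmonoid_mul.
Qed.

End AddMonoid.

Section Primitive.
Variables (S : finType) (G : lgraph S).
Hypothesis primG : primitive_graph G.
Implicit Types (u v : gV G).

Lemma primitive_closed_walk : exists u (c : seq (gE G)), walk u u c /\ (0 < size c)%N.
Proof.
case: primG => _ gcdG; apply: contrapT => no_cycle.
suff : 2%N = 1%N by [].
by apply: gcdG => u c hc c_gt0; exfalso; apply: no_cycle; exists u, c.
Qed.

Lemma primitive_out_edge v : exists e : gE G, gsrc e = v.
Proof.
have [u [c [hc c_gt0]]] := primitive_closed_walk; have [s hs] := primG.1 v u.
have := walk_cat hs hc; case: (s ++ c) (size_cat s c) => [|e t]; last first.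
  by move=> _ [he _]; exists e.
by move=> /= hsz; lia.
Qed.

Lemma primitive_in_edge v : exists e : gE G, gtgt e = v.
Proof.
have [u [c [hc c_gt0]]] := primitive_closed_walk; have [s hs] := primG.1 u v.
have := walk_cat hc hs; case/lastP: (c ++ s) (size_cat c s) => [|t e]; last first.
  by move=> _ /walk_rcons_tgt he; exists e.
by move=> /= hsz; lia.
Qed.

Lemma primitive_has_future v : has_future v.
Proof.
have [out hout] := choice primitive_out_edge.
exists (fun n => iter n (out \o @gtgt S G) (out v)); split=> [|n]; first exact: hout.
by rewrite iterS /= hout.
Qed.

Lemma primitive_has_past v : has_past v.
Proof.
have [inn hinn] := choice primitive_in_edge.
exists (fun n => iter n (inn \o @gsrc S G) (inn v)); split=> [|n]; first exact: hinn.
by rewrite iterS /= hinn.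
Qed.

(* A common divisor of the closed-walk lengths at u divides every cycle
   length: compare u -> v -> u with u -> v, then the cycle at v, then v -> u. *)
Lemma primitive_closed_walks_eventually : exists u T, forall t, (T <= t)%N ->
  exists s, walk u u s /\ size s = t.
Proof.
have [u [c [hc c_gt0]]] := primitive_closed_walk; case: primG => irrG gcdG.
pose A a := exists s, walk u u s /\ size s = a.
have A0 : A 0%N by exists [::].
have AD a b : A a -> A b -> A (a + b)%N.
  move=> [s [hs <-]] [t [ht <-]]; exists (s ++ t).
  by split; [exact: walk_cat hs ht | exact: size_cat].
have gcdA d : (forall a, A a -> (d %| a)%N) -> d = 1%N.
  move=> dA; apply: gcdG => v s hs _.
  have [s1 h1] := irrG u v; have [s2 h2] := irrG v u.
  have d12 : (d %| size s1 + size s2)%N.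
    by apply: dA; exists (s1 ++ s2); split; [exact: walk_cat h1 h2 | exact: size_cat].
  have : (d %| size s1 + size s2 + size s)%N.
    apply: dA; exists (s1 ++ s ++ s2); rewrite !size_cat.
    by split; [apply: walk_cat h1 (walk_cat hs h2) | lia].
  by rewrite dvdn_addr.
have [a [Aa Aa1]] : exists a, A a /\ A a.+1.
  by apply: addmonoid_consecutive => //; exists (size c); split=> //; exists c.
by exists u, (a * a)%N; apply: addmonoid_eventually.
Qed.

Lemma primitive_walks_of_length :
  exists N, forall p q : gV G, exists w, walk p q w /\ size w = N.
Proof.
have [u [T closedT]] := primitive_closed_walks_eventually.
have [f hf] := choice (fun p => primG.1 p u).
have [g hg] := choice (fun q => primG.1 u q).
pose K := (\max_p size (f p) + \max_q size (g q))%N.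
exists (T + K)%N => p q.
have hfp : (size (f p) <= \max_p size (f p))%N by apply: (leq_bigmax p).
have hgq : (size (g q) <= \max_q size (g q))%N by apply: (leq_bigmax q).
have [s [hs hsz]] := closedT (T + K - size (f p) - size (g q))%N ltac:(lia).
exists (f p ++ s ++ g q); rewrite !size_cat hsz.
by split; [apply: walk_cat (hf p) (walk_cat hs (hg q)) | lia].
Qed.

Variable X : zseq S -> Prop.
Hypothesis presG : presents G X.

Lemma primitive_nonempty : exists x, X x.
Proof.
have [u _] := primitive_closed_walk.
have [x [Xx _]] := factor_of_walk presG (erefl : walk u u [::])
  (primitive_has_past u) (primitive_has_future u).
by exists x.
Qed.

Lemma primitive_factor_bridge : exists N, forall s1 s2, factor X s1 -> factor X s2 ->
  exists w, size w = N /\ factor X (s1 ++ w ++ s2).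
Proof.
have [N HN] := primitive_walks_of_length; exists N => s1 s2 h1 h2.
have [p1 [q1 [w1 [hw1 hp1 _ <-]]]] := walk_of_factor presG h1.
have [p2 [q2 [w2 [hw2 _ hq2 <-]]]] := walk_of_factor presG h2.
have [w [hw hsz]] := HN q1 p2.
exists (map (@glab S G) w); rewrite size_map -!map_cat; split=> //.
apply: (factor_of_walk presG _ hp1 hq2).
exact: walk_cat hw1 (walk_cat hw hw2).
Qed.

End Primitive.

Section Hamming.
Variable T : eqType.
Implicit Types s t : seq T.

Definition hdist s t : nat := (\sum_(p <- zip s t) (p.1 != p.2))%N.

Lemma hdist_cat s1 s2 t1 t2 : size s1 = size t1 ->
  hdist (s1 ++ s2) (t1 ++ t2) = (hdist s1 t1 + hdist s2 t2)%N.
Proof. by move=> h; rewrite /hdist zip_cat // big_cat. Qed.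

Lemma hdist_le_size s t : (hdist s t <= size s)%N.
Proof.
rewrite /hdist; apply: (@leq_trans (\sum_(p <- zip s t) 1)%N).
  by apply: leq_sum => p _; case: (_ != _).
by rewrite sum1_size size_zip geq_minl.
Qed.

Lemma hdist_take m s t : size s = size t -> (hdist (take m s) (take m t) <= hdist s t)%N.
Proof.
move=> h; rewrite -{2}(cat_take_drop m s) -{2}(cat_take_drop m t) hdist_cat ?leq_addr //.
by rewrite !size_take h.
Qed.

Lemma hdist_rcons s t a b : size s = size t ->
  (hdist (rcons s a) (rcons t b) <= hdist s t + 1)%N.
Proof. by move=> h; rewrite -!cats1 hdist_cat // leq_add2l hdist_le_size. Qed.

End Hamming.

Lemma hammingE (S : finType) n (u v : n.-tuple S) : hamming u v = hdist u v.
Proof.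
rewrite /hamming /hdist -(map_tnth_enum u) -(map_tnth_enum v) zip_map big_map.
by rewrite big_enum.
Qed.

Section Covering.
Variables (S : finType) (n : nat).
Implicit Types (C A : {set n.-tuple S}) (F : n.-tuple S -> nat).

Lemma bigmin_le F C x : x \in C -> (\big[minn/n]_(i in C) F i <= F x)%N.
Proof.
move=> xC; rewrite -big_filter.
have : x \in [seq i <- index_enum _ | i \in C] by rewrite mem_filter mem_index_enum xC.
elim: (filter _ _) => [|a s IH] //; rewrite inE big_cons => /orP [/eqP ->|/IH h].
  exact: geq_minl.
by rewrite geq_min h orbT.
Qed.

Lemma bigmin_le_idx F C : (\big[minn/n]_(i in C) F i <= n)%N.
Proof. by elim/big_rec: _ => // i x _ h; rewrite geq_min h orbT. Qed.

Lemma bigmin_ge F C r : (forall x, x \in C -> r <= F x)%N ->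
  (r <= n)%N -> (r <= \big[minn/n]_(i in C) F i)%N.
Proof. by move=> h hr; elim/big_rec: _ => // i x hi hx; rewrite leq_min h. Qed.

Lemma covR_le_n C A : (covR C A <= n)%N.
Proof.
by rewrite /covR; elim/big_rec: _ => // i x _ h; rewrite geq_max h bigmin_le_idx.
Qed.

Lemma covR_ge C A y r : y \in A -> (forall x, x \in C -> r <= hamming x y)%N ->
  (r <= n)%N -> (r <= covR C A)%N.
Proof.
move=> yA hC hr; apply: leq_trans (bigmin_ge hC hr) _.
exact: (@leq_bigmax_cond _ (mem A) (fun y => \big[minn/n]_(x in C) hamming x y) y yA).
Qed.

Lemma covR_le C A r :
  (forall y, y \in A -> (n <= r)%N \/ exists2 x, x \in C & (hamming x y <= r)%N) ->
  (covR C A <= r)%N.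
Proof.
move=> h; rewrite /covR; elim/big_rec: _ => // i x iA hx; rewrite geq_max hx andbT.
case: (h i iA) => [hn|[z zC hz]].
  exact: leq_trans (bigmin_le_idx _ _) hn.
exact: leq_trans (bigmin_le _ zC) hz.
Qed.

Lemma covR_close C A y : y \in A ->
  (n <= covR C A)%N \/ exists2 x, x \in C & (hamming x y <= covR C A)%N.
Proof.
move=> yA; case: (pselect (exists2 x, x \in C & (hamming x y <= covR C A)%N)) => hex;
  [by right | left].
suff : (minn n (covR C A).+1 <= covR C A)%N by rewrite geq_min ltnn orbF.
apply: covR_ge yA _ (geq_minl _ _) => x xC.
rewrite geq_min ltnNge; apply/orP; right; apply/negP => hle.
by apply: hex; exists x.
Qed.

Lemma covR_far C A : covR C A = 0%N \/
  exists2 y, y \in A & forall x, x \in C -> (covR C A <= hamming x y)%N.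
Proof.
case: (pselect (exists2 y, y \in A & forall x, x \in C -> (covR C A <= hamming x y)%N))
  => hex; [by right | left].
suff : (covR C A <= (covR C A).-1)%N by lia.
apply: covR_le => y yA; right.
apply: contrapT => hn; apply: hex; exists y => // x xC.
rewrite leqNgt; apply/negP => hlt; apply: hn; exists x => //; lia.
Qed.

End Covering.

Section CoveringRadius.
Variables (S : finType) (X Y : zseq S -> Prop).

Definition Rcov n := covR (lang X n) (lang Y n).

Lemma Rcov_le_n n : (Rcov n <= n)%N.
Proof. exact: covR_le_n. Qed.

Lemma Rcov_le n r :
  (forall y, size y = n -> factor Y y ->
     (n <= r)%N \/ exists x, [/\ size x = n, factor X x & (hdist x y <= r)%N]) ->
  (Rcov n <= r)%N.
Proof.
move=> h; apply: covR_le => y /mem_lang Yy.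
case: (h y (size_tuple y) Yy) => [|[x [hx Xx hxy]]]; first by left.
by right; exists (Tuple (introT eqP hx)); rewrite ?mem_lang ?hammingE.
Qed.

Lemma Rcov_ge n y r : size y = n -> factor Y y ->
  (forall x, size x = n -> factor X x -> r <= hdist x y)%N -> (r <= n)%N ->
  (r <= Rcov n)%N.
Proof.
move=> hy Yy hX hr; apply: (covR_ge (y := Tuple (introT eqP hy))) => //.
  exact/mem_lang.
by move=> x /mem_lang Xx; rewrite hammingE; apply: hX => //; exact: size_tuple.
Qed.

Lemma Rcov_close n y : size y = n -> factor Y y ->
  (n <= Rcov n)%N \/ exists x, [/\ size x = n, factor X x & (hdist x y <= Rcov n)%N].
Proof.
move=> hy Yy; have : Tuple (introT eqP hy) \in lang Y n by exact/mem_lang.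
case/(covR_close (lang X n)) => [|[x /mem_lang Xx hxy]]; first by left.
right; exists x; split=> //; first exact: size_tuple.
by move: hxy; rewrite hammingE.
Qed.

Lemma Rcov_far n : Rcov n = 0%N \/
  exists y, [/\ size y = n, factor Y y &
     forall x, size x = n -> factor X x -> (Rcov n <= hdist x y)%N].
Proof.
case: (covR_far (lang X n) (lang Y n)) => [|[y /mem_lang Yy hX]]; first by left.
right; exists y; split=> //; first exact: size_tuple.
move=> x hx Xx; rewrite -[x]/(val (Tuple (introT eqP hx))) -hammingE.
by apply: hX; apply/mem_lang.
Qed.

Lemma Rcov_leS n : (Rcov n <= Rcov n.+1)%N.
Proof.
apply: Rcov_le => y hy Yy; have [a Yya] := factor_rcons Yy.
have hya : size (rcons y a) = n.+1 by rewrite size_rcons hy.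
case: (Rcov_close hya Yya) => [h|[x [hx Xx hxy]]]; first by left; lia.
right; exists (take n x); split.
- by rewrite size_take hx ltnSn.
- by have [] := @factor_cat _ X (take n x) (drop n x); rewrite ?cat_take_drop.
- apply: leq_trans hxy; rewrite -{1}(take_size_cat [:: a] hy) cats1.
  by apply: hdist_take; rewrite hx hya.
Qed.

Lemma Rcov_Sle n : (Rcov n.+1 <= Rcov n + 1)%N.
Proof.
apply: Rcov_le => y'; case/lastP: y' => [|y a] //.
rewrite size_rcons -cats1 => -[hy] /factor_cat [Yy _].
case: (Rcov_close hy Yy) => [h|[x [hx Xx hxy]]]; first by left; lia.
have [b Xxb] := factor_rcons Xx.
right; exists (rcons x b); split=> //; first by rewrite size_rcons hx.
rewrite cats1; apply: leq_trans (hdist_rcons b a _) _; last by rewrite leq_add2r.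
by rewrite hx hy.
Qed.

Lemma Rcov_monotone m n : (m <= n)%N -> (Rcov m <= Rcov n)%N.
Proof.
move=> /subnKC <-; elim: (n - m)%N => [|k IH]; first by rewrite addn0.
by apply: leq_trans IH _; rewrite addnS; apply: Rcov_leS.
Qed.

Lemma Rcov_lipschitz m k : (Rcov (m + k) <= Rcov m + k)%N.
Proof.
elim: k => [|k IH]; first by rewrite !addn0.
by rewrite addnS; apply: leq_trans (Rcov_Sle _) _; lia.
Qed.

End CoveringRadius.

Lemma seq_split3 (T : Type) (y : seq T) m k n : size y = (m + k + n)%N ->
  exists y1 y2 y3, [/\ y = y1 ++ y2 ++ y3, size y1 = m, size y2 = k & size y3 = n].
Proof.
move=> hy; exists (take m y), (take k (drop m y)), (drop k (drop m y)).
split; first by rewrite !cat_take_drop.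
- by rewrite size_take hy; case: ifP; lia.
- by rewrite size_take size_drop hy; case: ifP; lia.
- by rewrite !size_drop hy; lia.
Qed.

Section Additivity.
Variables (S : finType) (X Y : zseq S -> Prop) (G : lgraph S).

Lemma Rcov_close_nonempty n y : (exists x, X x) -> size y = n -> factor Y y ->
  exists x, [/\ size x = n, factor X x & (hdist x y <= Rcov X Y n)%N].
Proof.
move=> [x0 Xx0] hy Yy; case: (Rcov_close X hy Yy) => // hn.
have [x [hx Xx]] := factor_of_size n Xx0.
by exists x; split=> //; apply: leq_trans hn; rewrite -hx hdist_le_size.
Qed.

Lemma Rcov_subadditive : presents G X -> primitive_graph G ->
  exists N, forall m n, (Rcov X Y (m + n) <= Rcov X Y m + Rcov X Y n + N)%N.
Proof.
move=> presG primG; have [N bridge] := primitive_factor_bridge primG presG.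
have X0 := primitive_nonempty primG presG.
exists N => m n; apply: leq_trans (Rcov_monotone X Y (_ : m + n <= m + N + n)%N) _.
  by rewrite leq_add2r leq_addr.
apply: Rcov_le => y hy Yy; right.
have [y1 [y2 [y3 [ey hy1 hy2 hy3]]]] := seq_split3 hy.
rewrite ey; move: Yy; rewrite ey => /factor_cat [Yy1 /factor_cat [_ Yy3]].
have [x1 [hx1 Xx1 hxy1]] := Rcov_close_nonempty X0 hy1 Yy1.
have [x3 [hx3 Xx3 hxy3]] := Rcov_close_nonempty X0 hy3 Yy3.
have [w [hw Xw]] := bridge _ _ Xx1 Xx3.
exists (x1 ++ w ++ x3); split=> //; first by rewrite !size_cat hx1 hw hx3 addnA.
rewrite hdist_cat ?hx1 ?hy1 // hdist_cat ?hw ?hy2 //.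
by have := hdist_le_size w y2; rewrite hw; lia.
Qed.

Lemma Rcov_superadditive : presents G Y -> primitive_graph G ->
  exists N, forall m n, (Rcov X Y m + Rcov X Y n <= Rcov X Y (m + n) + N)%N.
Proof.
move=> presG primG; have [N bridge] := primitive_factor_bridge primG presG.
exists N => m n.
suff super : (Rcov X Y m + Rcov X Y n <= Rcov X Y (m + N + n))%N.
  by apply: leq_trans super _; rewrite -addnA [(N + n)%N]addnC addnA Rcov_lipschitz.
case: (Rcov_far X Y m) => [->|[y1 [hy1 Yy1 far1]]].
  by rewrite add0n; apply: Rcov_monotone; rewrite leq_addl.
case: (Rcov_far X Y n) => [->|[y3 [hy3 Yy3 far3]]].
  by rewrite addn0; apply: Rcov_monotone; rewrite -addnA leq_addr.
have [w [hw Yw]] := bridge _ _ Yy1 Yy3.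
have hy : size (y1 ++ w ++ y3) = (m + N + n)%N by rewrite !size_cat hy1 hw hy3 addnA.
apply: (Rcov_ge hy Yw) => [x hx Xx|]; last first.
  by have := Rcov_le_n X Y m; have := Rcov_le_n X Y n; lia.
have [x1 [x2 [x3 [ex hx1 hx2 hx3]]]] := seq_split3 hx.
rewrite ex; move: Xx; rewrite ex => /factor_cat [Xx1 /factor_cat [_ Xx3]].
rewrite hdist_cat ?hx1 ?hy1 // hdist_cat ?hx2 ?hw //.
by have := far1 _ hx1 Xx1; have := far3 _ hx3 Xx3; lia.
Qed.

End Additivity.

(* Divide n by k: b n <= (n %/ k) b k + b (n %% k), and b r <= b 0 + r b 1. *)
Lemma subadditive_ratio_bound (b : nat -> nat) k n :
  (forall m n, b (m + n) <= b m + b n)%N -> (0 < k)%N ->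
  (b n * k <= b k * n + (b 0 + k * b 1) * k)%N.
Proof.
move=> b_sub k_gt0.
have b_mul q r : (b (q * k + r) <= q * b k + b r)%N.
  elim: q => [|q IH]; first by rewrite !mul0n !add0n.
  by rewrite mulSn -addnA; apply: leq_trans (b_sub _ _) _; lia.
have b_small r : (b r <= b 0 + r * b 1)%N.
  elim: r => [|r IH]; first by rewrite mul0n addn0.
  by rewrite -addn1; apply: leq_trans (b_sub _ _) _; lia.
have n_eq := divn_eq n k; set q := (n %/ k)%N in n_eq; set r := (n %% k)%N in n_eq.
have r_lt : (r < k)%N by rewrite ltn_pmod.
have qk_le : (q * k <= n)%N by rewrite leq_divM.
pose M := (b 0 + k * b 1)%N.
have bn_le : (b n <= q * b k + M)%N.
  rewrite {1}n_eq; apply: leq_trans (b_mul q r) _; rewrite leq_add2l.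
  by apply: leq_trans (b_small r) _; rewrite leq_add2l leq_mul2r ltnW ?orbT.
apply: leq_trans (leq_mul bn_le (leqnn k)) _.
by rewrite mulnDl leq_add2r mulnAC mulnC leq_mul2l qk_le orbT.
Qed.

Section FeketeLimit.
Local Open Scope R_scope.

Lemma nonneg_seq_inf (u : nat -> R) : (forall n, 0 <= u n) ->
  exists L, (forall n, L <= u n) /\ forall eps, 0 < eps -> exists n, u n < L + eps.
Proof.
move=> u_ge0; have := Inf_seq_correct u; case: (Inf_seq u) => [L||] /= hL.
- exists L; split=> [n|eps eps_gt0]; last first.
    by have [_ [n hn]] := hL (mkposreal eps eps_gt0); exists n.
  apply: Rnot_lt_le => hlt.
  have [hn _] := hL (mkposreal (L - u n) ltac:(lra)); have /= := hn n; lra.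
- by have /= := hL (u 0%N) 0%N; lra.
- by have [n /= hn] := hL 0; have := u_ge0 n; lra.
Qed.

Lemma INR_pos n : (0 < n)%N -> 0 < INR n.
Proof. by move=> /ltP; apply: lt_0_INR. Qed.

(* With L the infimum of b k / k, choose k with b k / k < L + eps/2; then
   subadditive_ratio_bound gives b n / n <= b k / k + M / n for all n > 0. *)
Lemma fekete (b : nat -> nat) : (forall m n, b (m + n) <= b m + b n)%N ->
  exists L : R, is_lim_seq (fun n => INR (b n) / INR n) L.
Proof.
move=> b_sub; pose u n := INR (b n) / INR n.
have u_ge0 n : (0 < n)%N -> 0 <= u n.
  by move=> n_gt0; apply: Rdiv_le_0_compat; [exact: pos_INR | exact: INR_pos].
have [L [L_le L_inf]] := @nonneg_seq_inf (fun n => u n.+1) (fun n => u_ge0 n.+1 isT).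
exists L; apply/is_lim_seq_Reals => eps eps_gt0.
have [k' hk] := L_inf (eps / 2) ltac:(lra); set k := k'.+1 in hk.
pose M := (b 0 + k * b 1)%N.
have [N hN] := INR_archimed (eps / 2) (INR M) ltac:(lra).
exists (N + k)%N => n /leP hn; have n_gt0 : (0 < n)%N by lia.
have nR := INR_pos n_gt0; have kR := INR_pos (isT : (0 < k)%N).
have NnR : INR N <= INR n by apply: le_INR; apply/leP; lia.
have bound := le_INR _ _ (leP (subadditive_ratio_bound n b_sub (isT : (0 < k)%N))).
rewrite -/M plus_INR !mult_INR in bound.
have un_le : u n <= u k + INR M / INR n.
  rewrite /u; apply: (Rmult_le_reg_r (INR n * INR k)); first by nra.
  by rewrite Rmult_plus_distr_r; field_simplify; lra.
have Mn_lt : INR M / INR n < eps / 2.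
  by apply: (Rmult_lt_reg_r (INR n)) => //; field_simplify; nra.
have := L_le n.-1; rewrite prednK // => L_un.
by rewrite /R_dist Rabs_right; fold (u n); lra.
Qed.

Lemma fekete_defect (b : nat -> nat) c :
  (forall m n, b (m + n) <= b m + b n + c)%N ->
  exists L : R, is_lim_seq (fun n => INR (b n) / INR n) L.
Proof.
move=> b_sub; have [L hL] : exists L : R, is_lim_seq (fun n => INR (b n + c)%N / INR n) L.
  by apply: fekete => m n; have := b_sub m n; lia.
have inv_lim := is_lim_seq_inv _ _ is_lim_seq_INR ltac:(discriminate).
exists L; have := is_lim_seq_minus' _ _ _ _ hL (is_lim_seq_scal_l _ (INR c) _ inv_lim).
rewrite /= Rmult_0_r Rminus_0_r.
by apply: is_lim_seq_ext => n; rewrite plus_INR /Rdiv; ring.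
Qed.

Lemma is_lim_seq_ratio_compl (b : nat -> nat) (L : R) : (forall n, b n <= n)%N ->
  is_lim_seq (fun n => INR (n - b n) / INR n) L ->
  is_lim_seq (fun n => INR (b n) / INR n) (1 - L).
Proof.
move=> b_le hL; have := is_lim_seq_minus' _ _ _ _ (is_lim_seq_const 1) hL.
apply: is_lim_seq_ext_loc; exists 1%N => n /leP n_gt0.
rewrite minus_INR; last exact/leP.
by field; apply: Rgt_not_eq; apply: INR_pos.
Qed.

End FeketeLimit.

Lemma is_lim_seq_LimInf_Lim (u : nat -> R) (l : R) : is_lim_seq u l ->
  ex_finite_lim_seq u /\ LimInf_seq u = Lim_seq u.
Proof.
move=> hl; split; first by exists l.
by rewrite (is_LimInf_seq_unique _ _ (is_lim_LimInf_seq _ _ hl)) (is_lim_seq_unique _ _ hl).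
Qed.

Theorem proposition7 (S : finType) (X Y : zseq S -> Prop) :
  constrained_system X -> constrained_system Y ->
  (primitive_system X \/ primitive_system Y) ->
  ex_finite_lim_seq (covR_seq X Y) /\ covR_sys X Y = Lim_seq (covR_seq X Y).
Proof.
move=> _ _ primXY; rewrite /covR_sys.
suff [l hl] : exists l : R, is_lim_seq (covR_seq X Y) l by apply: is_lim_seq_LimInf_Lim hl.
case: primXY => [[G [primG presG]]|[G [primG presG]]].
  have [N sub] := Rcov_subadditive Y presG primG.
  exact: fekete_defect sub.
have [N super] := Rcov_superadditive X presG primG.
have [L hL] : exists L : R, is_lim_seq (fun n => INR (n - Rcov X Y n) / INR n) L.
  apply: (@fekete_defect _ N) => m n.
  by have := super m n; have := Rcov_le_n X Y m; have := Rcov_le_n X Y n;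
    have := Rcov_le_n X Y (m + n); lia.
by eexists; apply: is_lim_seq_ratio_compl (Rcov_le_n X Y) hL.
Qed.
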